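(* Let $A^\star\in\mathbb{R}^{n\times n}$, $B^\star\in\mathbb{R}^{n\times m}$, $C^\star\in\mathbb{R}^{p\times n}$ with $(A^\star,C^\star)$ observable with observability index $\ell^\star$, let data be generated as in the context and assume $\Delta_{10}\Delta_{10}^\top\preceq\Theta$. If $\sigma_{\min}(S_0S_0^\top)/\sigma_{\max}(\Theta_{22})>4$, then $\Psi_0\Psi_0^\top\succ\Theta_{22}$.
   Context: $\sigma_{\min},\sigma_{\max}$ denote smallest and largest singular values. Let $\ell=\ell^\star$. Data: for $k=0,\dots,T$ ($T\ge\ell$), $x(k+1)=A^\star x(k)+B^\star u(k)$, $y(k)=C^\star x(k)$ from some $x(0)$; $u^{\mathrm m}=u+d^u$, $y^{\mathrm m}=y+d^y$. Matrices with columns $j=0,\dots,T-\ell$: column $j$ of $\Psi_0$ is $(y^{\mathrm m}(j),\dots,y^{\mathrm m}(j+\ell-1),u^{\mathrm m}(j),\dots,u^{\mathrm m}(j+\ell-1))$; of $S_0$ is $(y(j),\dots,y(j+\ell-1),u(j),\dots,u(j+\ell-1))$; of $\Delta_{10}$ is $(d^y(j+\ell),d^y(j),\dots,d^y(j+\ell-1),d^u(j),\dots,d^u(j+\ell-1))$. $\Theta=\Theta^\top\succeq0$ of size $p+p\ell+m\ell$ is given, partitioned as $\begin{bmatrix}\Theta_{11}&\Theta_{12}\\\Theta_{12}^\top&\Theta_{22}\end{bmatrix}$ with $\Theta_{11}\in\mathbb{R}^{p\times p}$. *)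

From HB Require Import structures.
From mathcomp Require Import all_boot all_order all_algebra.
From mathcomp Require Import classical_sets reals.
Set Implicit Arguments. Unset Strict Implicit. Unset Printing Implicit Defensive.
Import Order.TTheory GRing.Theory Num.Theory.
Local Open Scope ring_scope.
Local Open Scope classical_set_scope.

Section Defs.
Variable R : realType.

(* entry r of a column vector, 0 if out of range *)
Definition vnth q (v : 'cV[R]_q) (r : nat) : R :=
  match insub r with Some i => v i 0 | None => 0 end.

Definition mnth q n (M : 'M[R]_(q, n)) (r : nat) (c : 'I_n) : R :=
  match insub r with Some i => M i c | None => 0 end.

(* stacked column (f j; f (j+1); ...; f (j+l-1)) *)
Definition stackc q (f : nat -> 'cV[R]_q) (l j : nat) : 'cV[R]_(l * q) :=
  \col_(i < l * q) vnth (f (j + (i %/ q)%N)) (i %% q)%N.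

(* observability matrix [C; CA; ...; CA^(l-1)] *)
Definition obs_mx n p (A : 'M[R]_n) (C : 'M[R]_(p, n)) (l : nat) : 'M[R]_(l * p, n) :=
  \matrix_(i < l * p, c < n) mnth (C *m A ^+ (i %/ p)%N) (i %% p)%N c.

Definition obs_index n p (A : 'M[R]_n) (C : 'M[R]_(p, n)) (l : nat) : Prop :=
  \rank (obs_mx A C l) = n /\ forall k, (k < l)%N -> (\rank (obs_mx A C k) < n)%N.

(* Hankel-type data matrix with columns j = 0..T-l: (f j..f(j+l-1), g j..g(j+l-1)) *)
Definition hankel2 p m (f : nat -> 'cV[R]_p) (g : nat -> 'cV[R]_m) (l T : nat)
  : 'M[R]_(l * p + l * m, (T - l).+1) :=
  \matrix_(i, j) (col_mx (stackc f l j) (stackc g l j)) i 0.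

(* Delta_10: columns (dy(j+l), dy j..dy(j+l-1), du j..du(j+l-1)) *)
Definition delta10 p m (dy : nat -> 'cV[R]_p) (du : nat -> 'cV[R]_m) (l T : nat)
  : 'M[R]_(p + (l * p + l * m), (T - l).+1) :=
  \matrix_(i, j)
    (col_mx (dy (j + l)%N) (col_mx (stackc dy l j) (stackc du l j))) i 0.

Definition psd q (M : 'M[R]_q) : Prop := forall x : 'cV[R]_q, 0 <= (x^T *m M *m x) 0 0.
Definition pd q (M : 'M[R]_q) : Prop :=
  forall x : 'cV[R]_q, x != 0 -> 0 < (x^T *m M *m x) 0 0.
Definition loewner_le q (M N : 'M[R]_q) : Prop := psd (N - M).
Definition loewner_lt q (M N : 'M[R]_q) : Prop := pd (N - M).

Definition sigma_max q (M : 'M[R]_q) : R :=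
  Num.sqrt (sup [set a : R | eigenvalue (M^T *m M) a]).
Definition sigma_min q (M : 'M[R]_q) : R :=
  Num.sqrt (inf [set a : R | eigenvalue (M^T *m M) a]).

End Defs.

From HB Require Import structures.
From mathcomp Require Import all_boot all_order all_algebra.
From mathcomp Require Import classical_sets reals.
From mathcomp Require Import sesquilinear spectral complex.
From mathcomp Require Import lra.
Set Implicit Arguments. Unset Strict Implicit. Unset Printing Implicit Defensive.
Import Order.TTheory GRing.Theory Num.Theory.
Local Open Scope ring_scope.

(* Write Psi0 = S0 + D0 with D0 the lower block of Delta10; restricting the
   Loewner bound to the lower-right block gives D0 D0^T <= Theta22.  For v != 0
   put a = S0^T v and b = D0^T v.  With s = sigma_min (S0 S0^T) and
   t = sigma_max Theta22, the inequality |a|^2 <= 2|a + b|^2 + 2|b|^2 and the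
   Rayleigh bounds s|v|^2 <= |a|^2, |b|^2 <= v^T Theta22 v <= t|v|^2 give
     v^T Psi0 Psi0^T v = |a + b|^2 >= (s/2 - t)|v|^2 > t|v|^2 >= v^T Theta22 v
   as soon as s > 4t.  The Rayleigh bounds come from the spectral theorem, which
   is available for complex normal matrices: a real symmetric matrix is
   diagonalised over C by a unitary matrix, with real spectrum. *)

Local Notation sqnorm v := ((v^T *m v) 0 0).
Local Notation qform M v := ((v^T *m M *m v) 0 0).

Section RealSymmetricSpectral.
Local Open Scope sesquilinear_scope.
Variables (R : realType) (q : nat) (A : 'M[R]_q).
Hypothesis Asym : A^T = A.
Local Notation toC := (real_complex R).
Local Notation Ac := (map_mx toC A).
Local Notation P := (spectralmx Ac).
Local Notation s := (spectral_diag Ac).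

Lemma conj_toC (r : R) : (toC r)^* = toC r.
Proof. exact: conjc_real. Qed.

Lemma complexify_hermsym : Ac \is hermsymmx.
Proof.
apply/is_hermitianmxP; rewrite expr0 scale1r.
by apply/matrixP => i j; rewrite !mxE conj_toC -[in RHS]Asym mxE.
Qed.

Lemma complexify_spectral : Ac = P^t* *m diag_mx s *m P.
Proof.
have /hermitian_normalmx /orthomx_spectralP {1}-> := complexify_hermsym.
by rewrite invmx_unitary ?spectral_unitarymx.
Qed.

Lemma spectral_unitary_mulC : P *m P^t* = 1%:M.
Proof. exact/unitarymxP/spectral_unitarymx. Qed.

Lemma spectral_mulmx : P *m Ac = diag_mx s *m P.
Proof.
by rewrite [X in P *m X]complexify_spectral !mulmxA spectral_unitary_mulC mul1mx.
Qed.

Lemma real_spectral_diag i : toC (complex.Re (s 0 i)) = s 0 i.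
Proof.
by apply/RRe_real/(mxOverP (hermitian_spectral_diag_real complexify_hermsym)).
Qed.

Lemma eigenvalue_spectral_diag i : eigenvalue Ac (s 0 i).
Proof.
apply/eigenvalueP; exists (row i P).
  rewrite -row_mul spectral_mulmx mul_diag_mx.
  by apply/rowP => j; rewrite !mxE.
apply/eqP => Pi0.
have := congr1 (fun M : 'rV_q => M 0 i) (row_mul i P (P^t*)).
rewrite spectral_unitary_mulC Pi0 mul0mx row1 !mxE !eqxx.
by move=> /eqP; rewrite oner_eq0.
Qed.

Lemma eigenvalue_Re_spectral_diag i : eigenvalue A (complex.Re (s 0 i)).
Proof.
rewrite eigenvalue_root_char -(fmorph_root toC) map_char_poly.
have := eigenvalue_spectral_diag i.
by rewrite eigenvalue_root_char -real_spectral_diag.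
Qed.

Section Coordinates.
Variable v : 'cV[R]_q.
Local Notation vc := (map_mx toC v).
Local Notation z := (P *m vc).

Lemma complexify_tr_coord : vc^T = z^t* *m P.
Proof.
have -> : z^t* = vc^T *m P^t*.
  rewrite trmx_mul map_mxM map_trmx; congr (_ *m _).
  by apply/matrixP => i j; rewrite !mxE; exact: conj_toC.
by rewrite -mulmxA (mulmx1C spectral_unitary_mulC) mulmx1.
Qed.

Lemma real_coord_sqnorm i :
  toC (complex.Re (z i 0 * (z i 0)^*)) = z i 0 * (z i 0)^*.
Proof. exact/RRe_real/ger0_real/mul_conjC_ge0. Qed.

Lemma complexify_sqnorm : toC (sqnorm v) = \sum_i z i 0 * (z i 0)^*.
Proof.
transitivity ((vc^T *m vc) 0 0); first by rewrite map_trmx -map_mxM [in RHS]mxE.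
move: complexify_tr_coord => ->; rewrite -mulmxA mxE.
by apply: eq_bigr => i _; rewrite !mxE mulrC.
Qed.

Lemma complexify_qform : toC (qform A v) = \sum_i s 0 i * (z i 0 * (z i 0)^*).
Proof.
transitivity ((vc^T *m Ac *m vc) 0 0).
  by rewrite map_trmx -!map_mxM [in RHS]mxE.
move: complexify_tr_coord => ->.
rewrite -(mulmxA _ P) spectral_mulmx mulmxA -(mulmxA _ _ vc) mul_mx_diag mxE.
by apply: eq_bigr => i _; rewrite !mxE mulrAC mulrC [_^* * _]mulrC.
Qed.

End Coordinates.
End RealSymmetricSpectral.

(* The weights are |z_i|^2, z being the coordinates of v in a unitary
   eigenbasis. *)
Lemma symmx_qform_eigen_combination (R : realType) q (A : 'M[R]_q) : A^T = A ->
  exists d : 'I_q -> R, (forall i, eigenvalue A (d i)) /\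
  forall v : 'cV_q, exists w : 'I_q -> R, [/\ forall i, 0 <= w i,
    \sum_i w i = sqnorm v & qform A v = \sum_i d i * w i].
Proof.
move=> Asym; set Ac := map_mx (real_complex R) A.
exists (fun i => complex.Re (spectral_diag Ac 0 i)).
split=> [i|v]; first exact: eigenvalue_Re_spectral_diag.
pose z := spectralmx Ac *m map_mx (real_complex R) v.
exists (fun i => complex.Re (z i 0 * (z i 0)^*)); split=> [i||].
- by rewrite -ler0c real_coord_sqnorm mul_conjC_ge0.
- apply: complexI; rewrite rmorph_sum (complexify_sqnorm A) /=.
  by apply: eq_bigr => i _; rewrite real_coord_sqnorm.
- apply: complexI; rewrite rmorph_sum complexify_qform //=.
  apply: eq_bigr => i _.
  by rewrite rmorphM /= real_spectral_diag // real_coord_sqnorm.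
Qed.

Section QuadraticForms.
Variable R : realType.

Lemma sqnormE q (v : 'cV[R]_q) : sqnorm v = \sum_i v i 0 ^+ 2.
Proof. by rewrite mxE; apply: eq_bigr => i _; rewrite mxE expr2. Qed.

Lemma sqnorm_ge0 q (v : 'cV[R]_q) : 0 <= sqnorm v.
Proof. by rewrite sqnormE sumr_ge0 // => i _; rewrite sqr_ge0. Qed.

Lemma sqnorm_gt0 q (v : 'cV[R]_q) : v != 0 -> 0 < sqnorm v.
Proof.
move=> vn0; rewrite lt_def sqnorm_ge0 andbT; apply: contra vn0.
rewrite sqnormE psumr_eq0 => [/allP v0|i _]; last exact: sqr_ge0.
apply/eqP/matrixP => i j; rewrite (ord1 j) mxE.
by apply/eqP; rewrite -sqrf_eq0; apply: v0; rewrite mem_index_enum.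
Qed.

Lemma sqnorm_le_parallelogram q (a b : 'cV[R]_q) :
  sqnorm a <= 2 * sqnorm (a + b) + 2 * sqnorm b.
Proof.
rewrite !sqnormE !mulr_sumr -big_split /=; apply: ler_sum => i _.
by rewrite mxE; have := sqr_ge0 (a i 0 + 2 * b i 0); nra.
Qed.

Lemma qform_gram q k (S : 'M[R]_(q, k)) (v : 'cV_q) :
  qform (S *m S^T) v = sqnorm (S^T *m v).
Proof. by rewrite trmx_mul trmxK !mulmxA. Qed.

Lemma trmx_gram q k (S : 'M[R]_(q, k)) : (S *m S^T)^T = S *m S^T.
Proof. by rewrite trmx_mul trmxK. Qed.

Lemma qformB q (M N : 'M[R]_q) (v : 'cV_q) :
  qform (M - N) v = qform M v - qform N v.
Proof. by rewrite mulmxBr mulmxBl mxE [X in _ + X]mxE. Qed.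

Lemma qform_eigenvector q (A : 'M[R]_q) a (v : 'cV_q) :
  A *m v = a *: v -> qform A v = a * sqnorm v.
Proof. by move=> Av; rewrite -mulmxA Av -scalemxAr mxE. Qed.

Lemma symmx_eigenvector q (A : 'M[R]_q) a : A^T = A -> eigenvalue A a ->
  exists2 v : 'cV_q, v != 0 & A *m v = a *: v.
Proof.
move=> Asym /eigenvalueP [u uA un0]; exists u^T; first by rewrite trmx_eq0.
by rewrite -{1}Asym -trmx_mul uA linearZ.
Qed.

End QuadraticForms.

Section SymmetricBounds.
Local Open Scope classical_set_scope.
Variables (R : realType) (q : nat).
Implicit Types (A M : 'M[R]_q) (v : 'cV[R]_q).

(* [sup] of a set that is not bounded above is a junk value. *)
Lemma symmx_eigenvalue_ub A :
  A^T = A -> exists K, forall a, eigenvalue A a -> a <= K.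
Proof.
move=> Asym; have [d [_ dA]] := symmx_qform_eigen_combination Asym.
exists (\sum_j `|d j|) => a /(symmx_eigenvector Asym) [v vn0 Av].
have [w [w0 ws qA]] := dA v.
rewrite -(ler_pM2r (sqnorm_gt0 vn0)) -(qform_eigenvector Av) qA -ws mulr_sumr.
apply: ler_sum => i _; apply: ler_wpM2r => //.
by rewrite (le_trans (real_ler_norm _)) ?num_real // (bigD1 i) //= lerDl sumr_ge0.
Qed.

Lemma symmx_qform_le A t : A^T = A -> (forall a, eigenvalue A a -> a <= t) ->
  forall v, qform A v <= t * sqnorm v.
Proof.
move=> Asym At v.
have [d [dA /(_ v) [w [w0 <- ->]]]] := symmx_qform_eigen_combination Asym.
by rewrite mulr_sumr ler_sum // => i _; rewrite ler_wpM2r ?At.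
Qed.

Lemma symmx_qform_ge A t : A^T = A -> (forall a, eigenvalue A a -> t <= a) ->
  forall v, t * sqnorm v <= qform A v.
Proof.
move=> Asym At v.
have [d [dA /(_ v) [w [w0 <- ->]]]] := symmx_qform_eigen_combination Asym.
by rewrite mulr_sumr ler_sum // => i _; rewrite ler_wpM2r ?At.
Qed.

Lemma psd_eigenvalue_ge0 M e : M^T = M -> psd M -> eigenvalue M e -> 0 <= e.
Proof.
move=> Msym Mpsd /(symmx_eigenvector Msym) [v vn0 Mv].
by have := Mpsd v; rewrite (qform_eigenvector Mv) pmulr_lge0 // sqnorm_gt0.
Qed.

Lemma psd_gram k (S : 'M[R]_(q, k)) : psd (S *m S^T).
Proof. by move=> v; rewrite qform_gram sqnorm_ge0. Qed.

Lemma trmx_trgram M : (M^T *m M)^T = M^T *m M.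
Proof. by rewrite trmx_mul trmxK. Qed.

Lemma eigenvalue_gram_ge0 M a : eigenvalue (M^T *m M) a -> 0 <= a.
Proof.
apply: psd_eigenvalue_ge0; first exact: trmx_trgram.
by rewrite -{2}[M]trmxK; apply: psd_gram.
Qed.

Lemma symmx_eigenvalue_gram_sqr M a : M^T = M -> eigenvalue M a ->
  eigenvalue (M^T *m M) (a ^+ 2).
Proof.
move=> Msym /eigenvalueP [u uM un0]; apply/eigenvalueP; exists u => //.
by rewrite Msym mulmxA uM -scalemxAl uM scalerA.
Qed.

Lemma eigenvalue_le_sigma_max M a : M^T = M -> eigenvalue M a -> a <= sigma_max M.
Proof.
move=> Msym Ma; have [K KM] := symmx_eigenvalue_ub (trmx_trgram M).
set E := [set b | eigenvalue (M^T *m M) b].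
have a2E : a ^+ 2 <= sup E.
  by apply: ub_le_sup; [exists K; exact: KM | exact: symmx_eigenvalue_gram_sqr].
rewrite (le_trans (real_ler_norm (num_real a))) // -sqrtr_sqr ler_sqrt //.
exact: le_trans (sqr_ge0 a) a2E.
Qed.

Lemma sigma_min_le_eigenvalue M a : M^T = M -> psd M -> eigenvalue M a ->
  sigma_min M <= a.
Proof.
move=> Msym Mpsd Ma; set E := [set b | eigenvalue (M^T *m M) b].
have Ea2 : inf E <= a ^+ 2.
  apply: ge_inf; last exact: symmx_eigenvalue_gram_sqr.
  by exists 0; exact: eigenvalue_gram_ge0.
have a0 := psd_eigenvalue_ge0 Msym Mpsd Ma.
by rewrite /sigma_min -(ger0_norm a0) -sqrtr_sqr ler_sqrt ?sqr_ge0.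
Qed.

Lemma qform_le_sigma_max M v : M^T = M -> qform M v <= sigma_max M * sqnorm v.
Proof.
by move=> Msym; apply: symmx_qform_le => // a; apply: eigenvalue_le_sigma_max.
Qed.

Lemma sigma_min_le_qform M v :
  M^T = M -> psd M -> sigma_min M * sqnorm v <= qform M v.
Proof.
by move=> Msym Mpsd; apply: symmx_qform_ge => // a; apply: sigma_min_le_eigenvalue.
Qed.

End SymmetricBounds.

Lemma loewner_lt_gram_perturbation (R : realType) q k (S D : 'M[R]_(q, k))
    (Theta : 'M[R]_q) :
  Theta^T = Theta -> loewner_le (D *m D^T) Theta ->
  4 * sigma_max Theta < sigma_min (S *m S^T) ->
  loewner_lt Theta ((S + D) *m (S + D)^T).
Proof.
move=> Tsym DT gap v vn0; rewrite qformB qform_gram linearD /= mulmxDl subr_gt0.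
have v0 := sqnorm_gt0 vn0.
have hD : sqnorm (D^T *m v) <= qform Theta v.
  by have := DT v; rewrite qformB qform_gram subr_ge0.
have hT := qform_le_sigma_max v Tsym.
have hS : sigma_min (S *m S^T) * sqnorm v <= sqnorm (S^T *m v).
  rewrite -qform_gram; apply: sigma_min_le_qform; first exact: trmx_gram.
  exact: psd_gram.
have hpar := sqnorm_le_parallelogram (S^T *m v) (D^T *m v).
have gapv : 4 * sigma_max Theta * sqnorm v < sigma_min (S *m S^T) * sqnorm v.
  by rewrite ltr_pM2r.
lra.
Qed.

Section BlockRestriction.
Variables (R : realType) (p q : nat).

Lemma qform_col_mx0 (M : 'M[R]_(p + q)) (v : 'cV_q) :
  qform M (col_mx 0 v) = qform (drsubmx M) v.
Proof.
rewrite -{1}[M]submxK tr_col_mx trmx0 mul_row_block !mul0mx !add0r.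
by rewrite mul_row_col mulmx0 add0r.
Qed.

Lemma loewner_le_drsubmx (M N : 'M[R]_(p + q)) :
  loewner_le M N -> loewner_le (drsubmx M) (drsubmx N).
Proof. by move=> MN v; rewrite -!raddfB /= -qform_col_mx0; apply: MN. Qed.

Lemma drsubmx_gram k (D : 'M[R]_(p + q, k)) :
  drsubmx (D *m D^T) = dsubmx D *m (dsubmx D)^T.
Proof. by rewrite -{1 2}[D]vsubmxK tr_col_mx mul_col_row block_mxKdr. Qed.

End BlockRestriction.

Section DataMatrices.
Variables (R : realType) (p m l T : nat).

Lemma stackcD q (f g : nat -> 'cV[R]_q) j :
  stackc (fun k => f k + g k) l j = stackc f l j + stackc g l j.
Proof.
apply/matrixP => i k; rewrite !mxE /vnth.
by case: insub => [x|]; rewrite ?mxE ?addr0.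
Qed.

Lemma hankel2D (f1 f2 : nat -> 'cV[R]_p) (g1 g2 : nat -> 'cV[R]_m) :
  hankel2 (fun k => f1 k + f2 k) (fun k => g1 k + g2 k) l T =
  hankel2 f1 g1 l T + hankel2 f2 g2 l T.
Proof.
by apply/matrixP => i j; rewrite !mxE !stackcD; case: split => k; rewrite mxE.
Qed.

Lemma dsubmx_delta10 (dy : nat -> 'cV[R]_p) (du : nat -> 'cV[R]_m) :
  dsubmx (delta10 dy du l T) = hankel2 dy du l T.
Proof. by apply/matrixP => i j; rewrite mxE [LHS]mxE col_mxEd [RHS]mxE. Qed.

End DataMatrices.

Theorem lemma10 (R : realType) (n m p : nat)
  (As : 'M[R]_n) (Bs : 'M[R]_(n, m)) (Cs : 'M[R]_(p, n)) (l T : nat)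
  (x : nat -> 'cV[R]_n) (u : nat -> 'cV[R]_m)
  (du : nat -> 'cV[R]_m) (dy : nat -> 'cV[R]_p)
  (Theta : 'M[R]_(p + (l * p + l * m))) :
  obs_index As Cs l ->
  (l <= T)%N ->
  (forall k, (k <= T)%N -> x k.+1 = As *m x k + Bs *m u k) ->
  Theta^T = Theta -> psd Theta ->
  let y := fun k => Cs *m x k in
  let ym := fun k => y k + dy k in
  let um := fun k => u k + du k in
  let Psi0 := hankel2 ym um l T in
  let S0 := hankel2 y u l T in
  let D10 := delta10 dy du l T in
  let Theta22 := drsubmx Theta in
  loewner_le (D10 *m D10^T) Theta ->
  sigma_min (S0 *m S0^T) / sigma_max Theta22 > 4 ->
  loewner_lt Theta22 (Psi0 *m Psi0^T).
Proof.
move=> _ _ _ Tsym _ y ym um Psi0 S0 D10 Theta22 D10_Theta ratio.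
have -> : Psi0 = S0 + dsubmx D10 by rewrite /Psi0 hankel2D dsubmx_delta10.
apply: loewner_lt_gram_perturbation.
- by rewrite trmx_drsub Tsym.
- by rewrite -drsubmx_gram; apply: loewner_le_drsubmx.
have t_ge0 : 0 <= sigma_max Theta22 by apply: sqrtr_ge0.
have t_gt0 : 0 < sigma_max Theta22.
  rewrite lt_def t_ge0 andbT; apply: contraTneq ratio => ->.
  by rewrite invr0 mulr0 -leNgt ler0n.
by rewrite -ltr_pdivlMr.
Qed.
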